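(* Let $X$ be a non-empty finite set and $\mathcal{P}=\{P_1,\ldots,P_n\}$ a partition of $X$ with $n\ge 2$ blocks, indexed so that $|P_i|\le|P_j|$ whenever $i<j$. Let $U\subseteq T(X,\mathcal{P})\setminus\Sigma(X,\mathcal{P})$ be such that $T(X,\mathcal{P})$ is generated (as a semigroup) by $\Sigma(X,\mathcal{P})\cup U$. Then for all distinct $i,j\in\{1,\ldots,n\}$ there exist $f\in U\cap\mathcal{A}$ and distinct $k,l\in\{1,\ldots,n\}$ such that $(k)\overline{f}=(l)\overline{f}$, $|P_i|=|P_k|$ and $|P_j|=|P_l|$.
   Context: Maps are written on the right and composed left to right. $T(X,\mathcal{P})$ is the semigroup of maps $f:X\to X$ such that each block of $\mathcal{P}$ is mapped into some block of $\mathcal{P}$; $\Sigma(X,\mathcal{P})$ is the set of $f\in T(X,\mathcal{P})$ whose image intersects every block of $\mathcal{P}$. For $f\in T(X,\mathcal{P})$, $\overline{f}:\{1,\ldots,n\}\to\{1,\ldots,n\}$ is defined by $(i)\overline{f}=j$ whenever $P_if\subseteq P_j$. $\mathcal{A}$ is the set of $f\in T(X,\mathcal{P})$ such that $f|_{P_i}$ is injective for every $i$ and $|\operatorname{im}(\overline{f})|=n-1$. *)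

From mathcomp Require Import all_boot.
Set Implicit Arguments. Unset Strict Implicit. Unset Printing Implicit Defensive.

(* A partition P = {P_0,...,P_{n-1}} of the finite set X (= finType T) with
   indexed blocks is encoded by a surjective block map blk : T -> 'I_n,
   P_i = blk^{-1}(i).  Maps are elements of {ffun T -> T}; x f is written f x. *)

Section Defs.
Variables (T : finType) (n : nat) (blk : T -> 'I_n).

Definition block (i : 'I_n) : {set T} := [set x | blk x == i].

Definition inTP (f : {ffun T -> T}) : bool :=
  [forall i : 'I_n, [exists j : 'I_n, [forall x in block i, f x \in block j]]].

Definition inSigma (f : {ffun T -> T}) : bool :=
  inTP f && [forall j : 'I_n, [exists x : T, f x \in block j]].

(* \bar f : (i) \bar f = j whenever P_i f ⊆ P_j (evaluated at a point of P_i;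
   blocks are non-empty, so this is well defined for f in T(X,P)). *)
Definition fbar (f : {ffun T -> T}) (i : 'I_n) : 'I_n :=
  if [pick x in block i] is Some x then blk (f x) else i.

Definition inA (f : {ffun T -> T}) : bool :=
  [&& inTP f,
      [forall i : 'I_n, [forall x in block i, [forall y in block i,
         (f x == f y) ==> (x == y)]]] &
      #|[set fbar f i | i : 'I_n]| == n.-1].

(* right-action composition: x (f g) = (x f) g *)
Definition rcomp (f g : {ffun T -> T}) : {ffun T -> T} := [ffun x => g (f x)].
End Defs.

Inductive sgen (T : finType) (S : pred {ffun T -> T}) : {ffun T -> T} -> Prop :=
  | sgen_base f : S f -> sgen S f
  | sgen_comp f g : sgen S f -> sgen S g -> sgen S (rcomp f g).

From mathcomp Require Import all_boot.
Set Implicit Arguments. Unset Strict Implicit. Unset Printing Implicit Defensive.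

(* Let g merge block P_i into P_j injectively and fix every other point.  Then
   g is injective on blocks, and its block map collapses exactly i and j.  Write
   g as a product of generators and follow the leftmost factor whose block map is
   not injective: all factors before it permute the blocks and, being injective
   on blocks, map each block onto one of the same size; the factors after it
   cannot separate what it identified.  That factor u is therefore injective on
   blocks and, its block map not being a permutation, lies outside Sigma, hence
   in U; it identifies two blocks of the sizes of P_i and P_j.  As its block map
   merges only images of blocks that g merges, |im ubar| >= n - 1, while u not
   in Sigma gives |im ubar| < n. *)

Section BlockMaps.
Variables (T : finType) (n : nat) (blk : T -> 'I_n).
Hypothesis blk_surj : forall i : 'I_n, exists x : T, blk x = i.

Definition block_inj (f : {ffun T -> T}) :=
  forall x y, blk x = blk y -> f x = f y -> x = y.

Lemma fbarE f x : inTP blk f -> fbar blk f (blk x) = blk (f x).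
Proof.
move=> /forallP /(_ (blk x)) /existsP [j /forallP fj].
rewrite /fbar; case: pickP => [y yx|/(_ x)]; last by rewrite inE eqxx.
have := fj y; rewrite yx inE => /eqP ->.
by have := fj x; rewrite !inE eqxx => /eqP ->.
Qed.

Lemma inTP_rcomp f g : inTP blk f -> inTP blk g -> inTP blk (rcomp f g).
Proof.
move=> fTP gTP; apply/forallP => i; have [y <-] := blk_surj i.
apply/existsP; exists (blk (g (f y))); apply/forallP => z; apply/implyP.
rewrite !inE /rcomp !ffunE => /eqP zy.
by rewrite -(fbarE _ gTP) -(fbarE _ fTP) zy (fbarE _ fTP) (fbarE _ gTP).
Qed.

Lemma fbar_rcomp f g k : inTP blk f -> inTP blk g ->
  fbar blk (rcomp f g) k = fbar blk g (fbar blk f k).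
Proof.
move=> fTP gTP; have [x <-] := blk_surj k.
by rewrite fbarE ?inTP_rcomp // !fbarE // /rcomp ffunE.
Qed.

Lemma sgen_inTP (S : pred {ffun T -> T}) f :
  (forall g, S g -> inTP blk g) -> sgen S f -> inTP blk f.
Proof. by move=> S_TP; elim=> [g /S_TP //|g h _ gTP _ hTP]; apply: inTP_rcomp. Qed.

Lemma inSigmaE f :
  inTP blk f -> inSigma blk f = ([set fbar blk f k | k : 'I_n] == setT).
Proof.
move=> fTP; rewrite /inSigma fTP -subTset; apply/forallP/subsetP => [hit j _|onto j].
  have /existsP [x] := hit j; rewrite inE => /eqP <-.
  by rewrite -fbarE // imset_f.
have /imsetP [k _ ->] := onto j (in_setT j); have [x <-] := blk_surj k.
by apply/existsP; exists x; rewrite inE fbarE.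
Qed.

Lemma inSigma_fbar_inj f : inSigma blk f -> injective (fbar blk f).
Proof.
move=> fS; have /andP [fTP _] := fS; move: fS; rewrite inSigmaE // => /eqP onto.
have : #|[set fbar blk f k | k : 'I_n]| == #|'I_n| by rewrite onto cardsT.
by move/imset_injP => fbar_inj x y; apply: fbar_inj.
Qed.

Lemma card_fbar_notSigma f : inTP blk f -> ~~ inSigma blk f ->
  #|[set fbar blk f k | k : 'I_n]| < n.
Proof.
move=> fTP; rewrite inSigmaE // -properT => /proper_card.
by rewrite cardsT card_ord.
Qed.

Section BlockBijection.
Variable f : {ffun T -> T}.
Hypotheses (fTP : inTP blk f) (f_inj : block_inj f) (fbar_inj : injective (fbar blk f)).

(* Block sizes cannot decrease along the permutation fbar f of the blocks, and
   they sum to #|T|, so f maps every block onto its image block. *)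
Lemma imset_block k : f @: block blk k = block blk (fbar blk f k).
Proof.
have sub_im l : f @: block blk l \subset block blk (fbar blk f l).
  apply/subsetP => y /imsetP [x]; rewrite inE => /eqP <- ->.
  by rewrite inE fbarE.
have card_im l : #|f @: block blk l| = #|block blk l|.
  by apply: card_in_imset => x y; rewrite !inE => /eqP xl /eqP yl; apply: f_inj; rewrite xl yl.
have le_im l : #|block blk l| <= #|block blk (fbar blk f l)|.
  by rewrite -card_im subset_leq_card.
have : \sum_l (#|block blk (fbar blk f l)| - #|block blk l|) == 0.
  have sum_im : \sum_l #|block blk (fbar blk f l)| = \sum_l #|block blk l|.
    by rewrite [RHS](reindex_inj fbar_inj).
  by rewrite sumnB // sum_im subnn.
rewrite sum_nat_eq0 => /forallP /(_ k) /=; rewrite subn_eq0 => le_k.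
by apply/eqP; rewrite eqEcard sub_im card_im.
Qed.

Lemma card_block_fbar k : #|block blk (fbar blk f k)| = #|block blk k|.
Proof.
rewrite -imset_block; apply: card_in_imset => x y.
by rewrite !inE => /eqP xk /eqP yk; apply: f_inj; rewrite xk yk.
Qed.

Lemma block_inj_rcompr g : block_inj (rcomp f g) -> block_inj g.
Proof.
move=> fg_inj x y xy gxy.
have [k fk] : exists k, fbar blk f k = blk x by exists (invF fbar_inj (blk x)); rewrite f_invF.
have : x \in f @: block blk k by rewrite imset_block inE fk.
have : y \in f @: block blk k by rewrite imset_block inE fk xy.
move=> /imsetP [y' y'k yE] /imsetP [x' x'k xE]; subst x y; congr (f _).
apply: fg_inj; last by rewrite /rcomp !ffunE.
by move: x'k y'k; rewrite !inE => /eqP -> /eqP ->.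
Qed.

End BlockBijection.

Lemma block_inj_rcompl f g : block_inj (rcomp f g) -> block_inj f.
Proof. by move=> fg_inj x y xy fxy; apply: fg_inj; rewrite // /rcomp !ffunE fxy. Qed.

Section CollapsingFactor.
Variable S : pred {ffun T -> T}.
Hypothesis S_TP : forall g, S g -> inTP blk g.

(* pi carries each block to the block that the factors preceding u map it onto. *)
Lemma collapsing_factor h : sgen S h -> block_inj h -> ~ injective (fbar blk h) ->
  exists u, exists pi : 'I_n -> 'I_n,
    [/\ S u /\ ~~ inSigma blk u, block_inj u, injective pi,
        forall x, #|block blk (pi x)| = #|block blk x| &
        forall x y, fbar blk u (pi x) = fbar blk u (pi y) ->
                    fbar blk h x = fbar blk h y].
Proof.
elim=> {h} [h Sh h_inj h_ninj|f g Sf IHf Sg IHg fg_inj fg_ninj].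
  exists h, id; split=> //; split=> //.
  by apply: contra_notN h_ninj; apply: inSigma_fbar_inj.
have [fTP gTP] := (sgen_inTP S_TP Sf, sgen_inTP S_TP Sg).
have f_inj := block_inj_rcompl fg_inj.
have [fbar_inj|/injectiveP fbar_ninj] := boolP (injectiveb (fbar blk f)); last first.
  have [u [pi [Su u_inj pi_inj pi_card pi_coll]]] := IHf f_inj fbar_ninj.
  exists u, pi; split=> // x y /pi_coll fxy.
  by rewrite !fbar_rcomp // fxy.
move/injectiveP: fbar_inj => fbar_inj.
have g_ninj : ~ injective (fbar blk g).
  by move=> gbar_inj; apply: fg_ninj => x y; rewrite !fbar_rcomp // => /gbar_inj /fbar_inj.
have [u [pi [Su u_inj pi_inj pi_card pi_coll]]] :=
  IHg (block_inj_rcompr fTP f_inj fbar_inj fg_inj) g_ninj.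
exists u, (pi \o fbar blk f); split=> //.
- exact: inj_comp.
- by move=> x /=; rewrite pi_card card_block_fbar.
- by move=> x y /pi_coll; rewrite !fbar_rcomp.
Qed.

End CollapsingFactor.

Lemma inA_block_inj f : inTP blk f -> block_inj f ->
  #|[set fbar blk f k | k : 'I_n]| = n.-1 -> inA blk f.
Proof.
move=> fTP f_inj card_im; apply/and3P; split=> //; last exact/eqP.
apply/forallP => k; apply/forall_inP => x xk; apply/forall_inP => y yk.
by apply/implyP => /eqP fxy; apply/eqP; move: xk yk; rewrite !inE => /eqP xk /eqP yk;
   apply: f_inj; rewrite // xk yk.
Qed.

End BlockMaps.

Lemma card_imset_coarser (A B C : finType) (p : A -> A) (a : A -> B) (b : A -> C) :
  (forall x y, a (p x) = a (p y) -> b x = b y) ->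
  #|[set b x | x in A]| <= #|[set a x | x in A]|.
Proof.
move=> ab; have [x0 _|A0] := pickP A; last first.
  by rewrite (leq_trans (leq_imset_card _ _)) // eq_card0.
pose F z := b (odflt x0 [pick x | a (p x) == z]).
apply: (leq_trans _ (leq_imset_card F _)); apply: subset_leq_card.
apply/subsetP => c /imsetP [x _ ->]; apply/imsetP; exists (a (p x)); first exact: imset_f.
by rewrite /F; case: pickP => [y /eqP /ab -> //|/(_ x)]; rewrite eqxx.
Qed.

Lemma exists_block_merge (T : finType) (n : nat) (blk : T -> 'I_n) (i j : 'I_n) :
  #|block blk i| <= #|block blk j| ->
  exists g, [/\ inTP blk g, block_inj blk g &
     forall x, blk (g x) = if blk x == i then j else blk x].
Proof.
move=> le_ij; set Pi := enum (block blk i); set Pj := enum (block blk j).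
have Pi_small x : x \in Pi -> index x Pi < size Pj.
  by move=> xi; rewrite -cardE; apply: leq_trans le_ij; rewrite cardE index_mem.
pose g := [ffun x => if blk x == i then nth x Pj (index x Pi) else x].
have gE x : blk (g x) = if blk x == i then j else blk x.
  rewrite /g ffunE; case: eqP => // xi.
  have : nth x Pj (index x Pi) \in Pj by rewrite mem_nth ?Pi_small // mem_enum inE xi.
  by rewrite mem_enum inE => /eqP.
exists g; split=> //.
- apply/forallP => k; apply/existsP; exists (if k == i then j else k).
  by apply/forall_inP => x; rewrite !inE => /eqP <-; rewrite gE.
- move=> x y xy; rewrite /g !ffunE -xy; case: eqP => // xi.
  have [x_i y_i] : x \in Pi /\ y \in Pi by rewrite !mem_enum !inE -xy xi.
  rewrite [in RHS](set_nth_default x) ?Pi_small //.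
  move/eqP; rewrite nth_uniq ?Pi_small ?enum_uniq // => /eqP ixy.
  by rewrite -(nth_index x x_i) ixy nth_index.
Qed.

Lemma merge_collision n (i j x y : 'I_n) : x != y ->
  (if x == i then j else x) = (if y == i then j else y) ->
  x = i /\ y = j \/ x = j /\ y = i.
Proof.
move=> xy; case: (x =P i) => [xi|_]; case: (y =P i) => [yi|_] fxy.
- by rewrite xi yi eqxx in xy.
- by left.
- by right.
- by rewrite fxy eqxx in xy.
Qed.

Section Lemma3p2.
Variables (T : finType) (n : nat) (blk : T -> 'I_n) (U : {set {ffun T -> T}}).
Hypothesis blk_surj : forall i : 'I_n, exists x : T, blk x = i.
Hypothesis U_TP : forall f, f \in U -> inTP blk f && ~~ inSigma blk f.
Hypothesis TP_gen : forall f : {ffun T -> T},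
  inTP blk f <-> sgen (fun g => inSigma blk g || (g \in U)) f.

Lemma merging_generator_in_U (i j : 'I_n) :
  i != j -> #|block blk i| <= #|block blk j| ->
  exists2 f, f \in U & inA blk f /\
    exists k l : 'I_n, [/\ k != l, fbar blk f k = fbar blk f l,
                        #|block blk i| = #|block blk k| &
                        #|block blk j| = #|block blk l| ].
Proof.
move=> ij le_ij; have [g [gTP g_inj gE]] := exists_block_merge le_ij.
have gbarE k : fbar blk g k = if k == i then j else k.
  by have [x <-] := blk_surj k; rewrite fbarE.
have gbar_ninj : ~ injective (fbar blk g).
  by move=> gbar_inj; move: ij; rewrite -(inj_eq gbar_inj) !gbarE eqxx if_same eqxx.
have S_TP g' : inSigma blk g' || (g' \in U) -> inTP blk g'.
  by case/orP => [/andP [] | /U_TP /andP []].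
have [u [pi [[Su uS] u_inj pi_inj pi_card pi_coll]]] :=
  collapsing_factor blk_surj S_TP (proj1 (TP_gen g) gTP) g_inj gbar_ninj.
have uU : u \in U by case/orP: Su => // uS'; rewrite uS' in uS.
have uTP := S_TP _ Su.
have card_ge : n.-1 <= #|[set fbar blk u k | k : 'I_n]|.
  have <- : #|[set~ i]| = n.-1 by rewrite cardsC1 card_ord.
  apply: leq_trans (card_imset_coarser pi_coll).
  apply/subset_leq_card/subsetP => k; rewrite !inE => ki.
  by apply/imsetP; exists k; rewrite // gbarE (negbTE ki).
have card_lt := card_fbar_notSigma blk_surj uTP uS.
exists u => //; split.
  apply: inA_block_inj => //; apply/eqP; rewrite eqn_leq card_ge andbT -ltnS.
  by rewrite (ltn_predK (ltn_ord i)).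
have /injectivePn [a [b ab uab]] : ~~ injectiveb (fbar blk u).
  apply: contraL card_lt => /injectiveP ubar_inj.
  by rewrite card_imset // card_ord ltnn.
have [x pi_x] : exists x, pi x = a by exists (invF pi_inj a); rewrite f_invF.
have [y pi_y] : exists y, pi y = b by exists (invF pi_inj b); rewrite f_invF.
have xy : x != y by apply: contraNneq ab => xy; rewrite -pi_x -pi_y xy.
have := pi_coll x y; rewrite pi_x pi_y !gbarE => /(_ uab) /(merge_collision xy).
case=> [[xi yj] | [xj yi]].
  by exists a, b; split; rewrite // -?pi_x -?pi_y pi_card ?xi ?yj.
by exists b, a; split; rewrite 1?eq_sym // -?pi_x -?pi_y pi_card ?xj ?yi.
Qed.

End Lemma3p2.

Theorem lemma3p2 (T : finType) (n : nat) (blk : T -> 'I_n)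
    (U : {set {ffun T -> T}}) :
  0 < #|T| ->
  2 <= n ->
  (forall i : 'I_n, exists x : T, blk x = i) ->
  (forall i j : 'I_n, (i < j)%N -> #|block blk i| <= #|block blk j|) ->
  (forall f, f \in U -> inTP blk f && ~~ inSigma blk f) ->
  (forall f : {ffun T -> T},
      inTP blk f <-> sgen (fun g => inSigma blk g || (g \in U)) f) ->
  forall i j : 'I_n, i != j ->
    exists2 f, f \in U & inA blk f /\
      exists k l : 'I_n, [/\ k != l, fbar blk f k = fbar blk f l,
                          #|block blk i| = #|block blk k| &
                          #|block blk j| = #|block blk l| ].
Proof.
move=> _ _ blk_surj _ U_TP TP_gen i j ij.
have [le_ij|/ltnW le_ji] := leqP #|block blk i| #|block blk j|.
  exact: merging_generator_in_U.
rewrite eq_sym in ij.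
have [f fU [fA [k [l [kl fkl ik jl]]]]] :=
  merging_generator_in_U blk_surj U_TP TP_gen ij le_ji.
by exists f => //; split=> //; exists l, k; rewrite eq_sym.
Qed.
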